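(* For every integer $n\ge 1$, the relation $\preceq_{\mathsf{MWC}}$ is a partial order on $\mathcal{G}_{\mathsf{cwvg}}(n)$, and the poset $(\mathcal{G}_{\mathsf{cwvg}}(n),\preceq_{\mathsf{MWC}})$ is graded with rank function $\rho:\mathcal{G}_{\mathsf{cwvg}}(n)\to\mathbb{N}$, $\rho(G)=|W_{\min,G}|$, where $W_{\min,G}$ is the set of minimal winning coalitions of $G$. Moreover, this poset has a least element, and its rank is $0$.
   Context: Let $N=\{1,\dots,n\}$. A simple game on $N$ is a function $v:2^N\to\{0,1\}$ (the game in which every coalition is losing is allowed); coalitions $S$ with $v(S)=1$ are winning, the others losing. A minimal winning coalition is a winning coalition $S$ such that $S\setminus\{i\}$ is losing for every $i\in S$. A simple game is a weighted voting game if there are $q\ge 0$ and $w_1,\dots,w_n\ge 0$ with $v(S)=1\iff\sum_{i\in S}w_i\ge q$ for all $S\subseteq N$; $[q;w_1,\dots,w_n]$ is then a weighted representation. For players $i,j$, write $i\succeq j$ if $v(S\cup\{i\})\ge v(S\cup\{j\})$ for all $S\subseteq N\setminus\{i,j\}$. A canonical weighted voting game on $N$ is a weighted voting game with $1\succeq 2\succeq\cdots\succeq n$; $\mathcal{G}_{\mathsf{cwvg}}(n)$ denotes the set of these. For $G,G'\in\mathcal{G}_{\mathsf{cwvg}}(n)$, $G\preceq_{\mathsf{MWC}}G'$ holds iff there is a sequence $G=G_1,\dots,G_k=G'$ ($k\ge1$) of games in $\mathcal{G}_{\mathsf{cwvg}}(n)$ such that for each $1\le i<k$, $W_{\min,G_i}\subset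 W_{\min,G_{i+1}}$ and $|W_{\min,G_{i+1}}|=|W_{\min,G_i}|+1$. A poset $(S,\preceq)$ is graded with rank function $\rho:S\to\mathbb{N}$ if (i) $\rho$ is constant on the minimal elements, (ii) $x\preceq y$ implies $\rho(x)\le\rho(y)$, and (iii) whenever $y$ covers $x$ (i.e., $x\preceq y$, $x\ne y$, and there is no $z\notin\{x,y\}$ with $x\preceq z\preceq y$) we have $\rho(y)=\rho(x)+1$. *)

From HB Require Import structures.
From mathcomp Require Import all_boot all_order all_algebra.
From mathcomp Require Import reals.
From Stdlib Require Import Relations.
Set Implicit Arguments. Unset Strict Implicit. Unset Printing Implicit Defensive.
Import Order.TTheory GRing.Theory Num.Theory.

(* A simple game on N = {0,...,n-1} (player k+1 of the paper is 'I_n element k):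
   a Boolean function on coalitions; true = winning. *)
Definition game (n : nat) := {ffun {set 'I_n} -> bool}.

Definition min_winning n (v : game n) (S : {set 'I_n}) : bool :=
  v S && [forall i in S, ~~ v (S :\ i)].

Definition Wmin n (v : game n) : {set {set 'I_n}} := [set S | min_winning v S].

Definition rho n (v : game n) : nat := #|Wmin v|.

Definition weighted (R : realType) n (v : game n) : Prop :=
  exists (q : R) (w : 'I_n -> R),
    (0 <= q)%R /\ (forall i, (0 <= w i)%R) /\
    (forall S : {set 'I_n}, v S = (q <= \sum_(i in S) w i)%R).

Definition desir n (v : game n) (i j : 'I_n) : Prop :=
  forall S : {set 'I_n}, i \notin S -> j \notin S ->
    (v (j |: S) ==> v (i |: S)).

Definition cwvg (R : realType) n (v : game n) : Prop :=
  weighted R v /\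
  (forall i j : 'I_n, nat_of_ord j = (nat_of_ord i).+1 -> desir v i j).

Definition mwc_step (R : realType) n (G G' : game n) : Prop :=
  cwvg R G /\ cwvg R G' /\ Wmin G \subset Wmin G' /\ #|Wmin G'| = (#|Wmin G|).+1.

Definition mwc_le (R : realType) n : relation (game n) :=
  clos_refl_trans_1n (game n) (@mwc_step R n).

Definition covers (R : realType) n (x y : game n) : Prop :=
  mwc_le R x y /\ x <> y /\
  ~ (exists z, cwvg R z /\ z <> x /\ z <> y /\ mwc_le R x z /\ mwc_le R z y).

Definition is_minimal (R : realType) n (x : game n) : Prop :=
  cwvg R x /\ forall y, cwvg R y -> mwc_le R y x -> y = x.

(* Every step of the order adds exactly one minimal winning coalition, so the
   rank |W_min| strictly increases along nontrivial chains; antisymmetry,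
   monotonicity of the rank and the cover property follow.  The all-losing game
   has rank 0 and lies below every canonical weighted game G, because one can
   always delete a single minimal winning coalition of G without leaving the
   class: with sorted weights, let k be the last player occurring in a minimal
   winning coalition and S the lightest minimal winning coalition containing k.
   Lowering the weight of k until S just reaches the quota, and then perturbing
   by a small lexicographic tie-break that keeps the weights sorted, makes S and
   exactly those of its supersets containing no other minimal winning coalition
   losing. *)

From mathcomp Require Import all_boot all_order all_algebra perm.
From mathcomp Require Import reals ring lra zify.
From Stdlib Require Import Relations.
Set Implicit Arguments. Unset Strict Implicit. Unset Printing Implicit Defensive.
Import Order.TTheory GRing.Theory Num.Theory.

Section MinimalWinning.
Variable n : nat.
Implicit Types (v : game n) (S T M : {set 'I_n}).

Definition monotone_game v := forall S T, S \subset T -> v S -> v T.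

Lemma Wmin_win v M : M \in Wmin v -> v M.
Proof. by rewrite inE => /andP []. Qed.

Lemma Wmin_minimal v M i : M \in Wmin v -> i \in M -> v (M :\ i) = false.
Proof. by rewrite inE => /andP [_ /forall_inP/(_ i) h] /h /negbTE. Qed.

Lemma Wmin_sub_exists v S : v S -> exists2 M, M \in Wmin v & M \subset S.
Proof.
move=> vS; pose P M := v M && (M \subset S); have PS : P S by rewrite /P vS subxx.
have [M /andP [vM sMS] minM] := arg_minnP (fun M => #|M|) PS.
exists M => //; rewrite inE /min_winning vM; apply/forall_inP => i iM; apply/negP => vMi.
have := minM (M :\ i); rewrite /P vMi (subset_trans (subD1set M i) sMS) => /(_ isT).
by rewrite (cardsD1 i M) iM ltnn.
Qed.

Lemma Wmin_set0 v : set0 \in Wmin v -> monotone_game v -> Wmin v = [set set0].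
Proof.
move=> W0 mono; apply/setP => M; rewrite in_set1; apply/idP/eqP => [MW|-> //].
apply/eqP/negPn/negP => /set0Pn [i iM].
by have := Wmin_minimal MW iM; rewrite (mono _ _ (sub0set (M :\ i)) (Wmin_win W0)).
Qed.

Lemma Wmin_upclosure v v' (A : {set {set 'I_n}}) : monotone_game v -> A \subset Wmin v ->
  (forall T, v' T = [exists M in A, M \subset T]) -> Wmin v' = A.
Proof.
move=> mono sAW v'E; apply/setP => M; rewrite inE /min_winning v'E.
have AW M' : M' \in A -> M' \in Wmin v by apply: (subsetP sAW).
apply/idP/idP => [/andP [/exists_inP [M' M'A sM'M] /forall_inP minM]|MA].
  have [<- //|[i iM iM']] : M' = M \/ exists2 i, i \in M & i \notin M'.
    case: (boolP (M \subset M')) => [sMM'|/subsetPn]; last by right.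
    by left; apply/eqP; rewrite eqEsubset sM'M.
  have := minM i iM; rewrite v'E => /exists_inP []; exists M' => //.
  apply/subsetP => x xM'; rewrite !inE (subsetP sM'M x xM') andbT.
  by apply: contraNneq iM' => <-.
apply/andP; split; first by apply/exists_inP; exists M.
apply/forall_inP => i iM; rewrite v'E; apply/exists_inP => -[M' M'A sM'].
by have := Wmin_minimal (AW _ MA) iM; rewrite (mono _ _ sM' (Wmin_win (AW _ M'A))).
Qed.

End MinimalWinning.

Section WeightedRepresentation.
Local Open Scope ring_scope.
Variables (R : realType) (n : nat).
Implicit Types (v : game n) (q : R) (w : 'I_n -> R) (S T M : {set 'I_n}).

Definition wrep v q w : Prop :=
  [/\ 0 <= q, forall i, 0 <= w i & forall S, v S = (q <= \sum_(i in S) w i)].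

Definition sorted_weights w := forall i j : 'I_n, j = i.+1 :> nat -> w j <= w i.

Lemma ler_sum_subset (I : finType) (F : I -> R) (A B : {set I}) :
  (forall i, 0 <= F i) -> A \subset B -> \sum_(i in A) F i <= \sum_(i in B) F i.
Proof.
move=> F0 sAB; rewrite [leRHS](big_setID A) /= (setIidPr sAB) lerDl.
exact: sumr_ge0.
Qed.

Lemma sum_gt0_exists (I : finType) (F : I -> R) (A : {set I}) :
  0 < \sum_(i in A) F i -> exists2 i, i \in A & 0 < F i.
Proof.
move=> pos; apply/exists_inP; apply: contraTT pos; rewrite negb_exists_in => /forall_inP F_le0.
by rewrite -leNgt sumr_le0 // => i /F_le0; rewrite leNgt.
Qed.

Lemma wrep_monotone v q w : wrep v q w -> monotone_game v.
Proof.
by case=> _ w0 vE S T sST; rewrite !vE => /le_trans; apply; apply: ler_sum_subset.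
Qed.

Lemma Wmin_weight_gt0 v q w M i : wrep v q w -> M \in Wmin v -> i \in M -> 0 < w i.
Proof.
case=> _ w0 vE MW iM; rewrite lt_def w0 andbT; apply: contraFN (Wmin_minimal MW iM).
by move/eqP=> wi0; have := Wmin_win MW; rewrite !vE (big_setD1 i iM) /= wi0 add0r.
Qed.

Lemma sorted_weights_le w : sorted_weights w ->
  forall i j : 'I_n, (i <= j)%N -> w j <= w i.
Proof.
move=> sw i [j ltjn] /= leij; elim: j ltjn leij => [|j IHj] ltjn leij.
  by have -> : i = Ordinal ltjn by apply/val_inj/eqP; rewrite -leqn0.
case: (ltngtP i j.+1) leij => [ltij _|//|eqij _]; last first.
  by have -> : i = Ordinal ltjn by apply: val_inj.
have ltjn' : (j < n)%N by apply: ltnW.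
exact: le_trans (sw (Ordinal ltjn') (Ordinal ltjn) erefl) (IHj ltjn' ltij).
Qed.

Lemma sorted_wrep_cwvg v q w : wrep v q w -> sorted_weights w -> cwvg R v.
Proof.
move=> [q0 w0 vE] sw; split; first by exists q, w.
move=> i j eji S iS jS; rewrite !vE !big_setU1 //=; apply/implyP=> /le_trans; apply.
by rewrite lerD2r sw.
Qed.

End WeightedRepresentation.

Lemma tperm_imset_id (T : finType) (i j : T) (S : {set T}) :
  (i \in S) = (j \in S) -> tperm i j @: S = S.
Proof.
move=> eqij; apply/setP => y; rewrite -[y in LHS](tpermK i j) mem_imset; last exact: perm_inj.
by case: tpermP => [->|->|].
Qed.

Lemma tperm_imset_swap (T : finType) (i j : T) (S : {set T}) : i \in S -> j \notin S ->
  tperm i j @: S = j |: (S :\ i).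
Proof.
move=> iS jS; apply/setP => y; rewrite -[y in LHS](tpermK i j) mem_imset; last exact: perm_inj.
rewrite !inE; case: tpermP => [->|->|/eqP/negbTE -> /eqP/negbTE ->] //.
  by rewrite (negbTE jS) eqxx orbF; apply/esym/eqP => eij; move: jS; rewrite -eij iS.
by rewrite eqxx.
Qed.

Section SortedRepresentation.
Local Open Scope ring_scope.
Variables (R : realType) (n : nat).
Implicit Types (v : game n) (q : R) (w : 'I_n -> R) (S Q : {set 'I_n}).

Lemma swap_invariant_game v (i j : 'I_n) :
  (forall Q, i \notin Q -> j \notin Q -> v (i |: Q) = v (j |: Q)) ->
  forall S, v (tperm i j @: S) = v S.
Proof.
move=> vij S.
have one_side (a b : 'I_n) : (forall Q, a \notin Q -> b \notin Q -> v (a |: Q) = v (b |: Q)) ->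
    a \in S -> b \notin S -> v (tperm a b @: S) = v S.
  move=> vab aS bS; rewrite tperm_imset_swap // -[in RHS](setD1K aS) vab //.
    by rewrite !inE eqxx.
  by rewrite !inE negb_and bS orbT.
case: (boolP (i \in S)) => iS; case: (boolP (j \in S)) => jS.
- by rewrite tperm_imset_id // iS jS.
- exact: one_side.
- by rewrite tpermC; apply: one_side => // Q jQ iQ; apply/esym/vij.
- by rewrite tperm_imset_id // (negbTE iS) (negbTE jS).
Qed.

Definition inversions w := #|[set p : 'I_n * 'I_n | (p.1 < p.2)%N && (w p.1 < w p.2)]|.

Lemma tperm_adjacent_ltn (i j a b : 'I_n) : j = i.+1 :> nat -> (a < b)%N -> (a, b) != (i, j) ->
  (tperm i j a < tperm i j b)%N.
Proof.
have val_neq (x y : 'I_n) : x <> y -> (x : nat) <> y by move=> xy /val_inj.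
move=> eji ltab neq; case: tpermP => [ai|aj|/val_neq ai /val_neq aj];
  case: tpermP => [bi|bj|/val_neq bi /val_neq bj]; subst => //; try lia.
by rewrite eqxx in neq.
Qed.

Lemma inversions_tperm_lt w (i j : 'I_n) : j = i.+1 :> nat -> w i < w j ->
  (inversions (w \o tperm i j) < inversions w)%N.
Proof.
move=> eji wij; pose t := tperm i j; pose f (p : 'I_n * 'I_n) := (t p.1, t p.2).
have f_inj : injective f by move=> [a b] [c d] [/perm_inj -> /perm_inj ->].
rewrite /inversions -(card_imset _ f_inj); apply: proper_card; apply/properP; split.
  apply/subsetP => _ /imsetP [[a b] /[!inE] /andP [ltab wab] ->] /=.
  rewrite wab andbT; apply: tperm_adjacent_ltn => //.
  by apply: contraTneq wab => -[-> ->] /=; rewrite tpermL tpermR -leNgt ltW.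
exists (i, j); first by rewrite inE /= eji ltnSn wij.
apply/imsetP => -[[a b] /[!inE] /andP [ltab _] [ia jb]].
move: ltab; rewrite -(tpermK i j a) -(tpermK i j b) -/t -ia -jb tpermL tpermR eji.
by rewrite ltnNge leqnSn.
Qed.

Lemma wrep_tperm v q w (i j : 'I_n) : wrep v q w -> desir v i j -> w i < w j ->
  wrep v q (w \o tperm i j).
Proof.
move=> [q0 w0 vE] dij wij; split=> // [x|S]; first exact: w0.
have vij Q : i \notin Q -> j \notin Q -> v (i |: Q) = v (j |: Q).
  move=> iQ jQ; apply/idP/idP; last exact: (implyP (dij Q iQ jQ)).
  by rewrite !vE !big_setU1 //= => /le_trans; apply; rewrite lerD2r ltW.
by rewrite -(swap_invariant_game vij) vE big_imset //; apply: in2W perm_inj.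
Qed.

(* Swapping an adjacent out-of-order pair keeps the representation (the two
   players are then equally desirable) and removes an inversion. *)
Lemma cwvg_sorted_wrep v : cwvg R v -> exists q w, wrep v q w /\ sorted_weights w.
Proof.
move=> [[q [w [q0 [w0 vE]]]] dv]; exists q.
have : wrep v q w by [].
have [m] := ubnP (inversions w); elim: m w {q0 w0 vE} => // m IHm w lt_inv_m vw.
case: (boolP [exists i : 'I_n, exists j : 'I_n, (j == i.+1 :> nat) && (w i < w j)]).
  case/existsP => i /existsP [j /andP [/eqP eji wij]].
  apply: (IHm (w \o tperm i j)); last exact: wrep_tperm vw (dv i j eji) wij.
  exact: leq_trans (inversions_tperm_lt eji wij) lt_inv_m.
rewrite negb_exists => /forallP sorted; exists w; split=> // i j eji.
by move: (sorted i); rewrite negb_exists => /forallP/(_ j); rewrite eji eqxx leNgt.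
Qed.

End SortedRepresentation.

Lemma bits_sum_inj n (b b' : 'I_n -> bool) :
  \sum_(i < n) b i * 2 ^ i = \sum_(i < n) b' i * 2 ^ i -> b =1 b'.
Proof.
elim: n b b' => [|n IHn] b b' + i; first by case: i.
have double (c : 'I_n.+1 -> bool) : \sum_(i < n) c (lift ord0 i) * 2 ^ bump 0 i =
    2 * \sum_(i < n) c (lift ord0 i) * 2 ^ i.
  by rewrite big_distrr; apply: eq_bigr => j _; rewrite /bump add1n expnS mulnCA.
rewrite !big_ord_recl !expn0 !muln1 !double => eq_sums.
have eq0 : b ord0 = b' ord0.
  by move: eq_sums; case: (b ord0); case: (b' ord0) => //=; lia.
have eq_tail : \sum_(i < n) b (lift ord0 i) * 2 ^ i = \sum_(i < n) b' (lift ord0 i) * 2 ^ i.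
  by move: eq_sums; rewrite eq0; lia.
by case: (unliftP ord0 i) => [j ->|->] //; apply: IHn eq_tail j.
Qed.

(* Exponent [n - i] rather than [i]: the code weights must decrease with [i]. *)
Lemma sum_pow2_inj n (A B : {set 'I_n}) :
  \sum_(i in A) 2 ^ (n - i) = \sum_(i in B) 2 ^ (n - i) -> A = B.
Proof.
have bits (C : {set 'I_n}) :
    \sum_(i in C) 2 ^ (n - i) = 2 * \sum_(j < n) (rev_ord j \in C) * 2 ^ j.
  rewrite big_mkcond (reindex_inj rev_ord_inj) big_distrr /=; apply: eq_bigr => j _.
  case: (rev_ord j \in C); last by rewrite muln0.
  by rewrite mul1n -expnS; congr (2 ^ _); have := ltn_ord j; rewrite /=; lia.
rewrite !bits => /eqP; rewrite eqn_pmul2l // => /eqP /bits_sum_inj eqAB.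
by apply/setP => i; have := eqAB (rev_ord i); rewrite rev_ordK.
Qed.

Section Perturbation.
Local Open Scope ring_scope.
Variable R : realType.

Lemma finite_pos_lower_bound (T : finType) (F : T -> R) :
  (forall x, 0 < F x) -> exists2 e, 0 < e & forall x, e <= F x.
Proof.
move=> F_gt0; case: (pickP (fun _ : T => true)) => [x0 x0T|T0].
  by case: (@arg_minP _ _ _ x0 predT F isT) => y _ ymin; exists (F y) => // x; apply: ymin.
by exists 1 => // x; have := T0 x.
Qed.

Definition lex_pos (a b : R) := (0 < a) || (a == 0) && (0 < b).

Lemma lex_perturbation (T : finType) (f g : T -> R) (e1 : R) : 0 < e1 ->
  exists e, [/\ 0 < e, e <= e1 & forall x, (0 < f x + e * g x) = lex_pos (f x) (g x)].
Proof.
move=> e1_gt0; pose F x := if f x == 0 then 1 else `|f x| / (1 + `|g x|).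
have [e0 e0_gt0 e0F] : exists2 e0, 0 < e0 & forall x, e0 <= F x.
  apply: finite_pos_lower_bound => x; rewrite /F; case: eqP => // /eqP fx.
  by rewrite divr_gt0 ?normr_gt0 // ltr_wpDr.
exists (Num.min e0 e1); split=> [|//|x]; first by rewrite lt_min e0_gt0.
  by rewrite ge_min lexx orbT.
set e := Num.min e0 e1; have e_gt0 : 0 < e by rewrite lt_min e0_gt0.
have [->|fx] := eqVneq (f x) 0; first by rewrite /lex_pos add0r pmulr_rgt0 // ?ltxx ?eqxx.
rewrite /lex_pos (negbTE fx) andFb orbF.
have small : `|e * g x| < `|f x|.
  have := e0F x; rewrite /F (negbTE fx) ler_pdivlMr ?ltr_wpDr // normrM gtr0_norm //.
  have : e * `|g x| <= e0 * `|g x| by rewrite ler_wpM2r // ge_min lexx.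
  by have := normr_ge0 (g x); lra.
have [flt0|fgt0|f0] := ltrgtP (f x) 0; last by rewrite f0 eqxx in fx.
- move: small; rewrite (ltr0_norm flt0) ltr_norml => /andP [h1 h2].
  by apply/negbTE; rewrite -leNgt; lra.
- by move: small; rewrite (gtr0_norm fgt0) ltr_norml => /andP [h1 h2]; lra.
Qed.

Lemma strict_threshold (I : finType) (u : I -> R) (t : R) : (forall i, 0 <= u i) ->
  exists2 q, 0 <= q & forall A : {set I}, (t < \sum_(i in A) u i) = (q <= \sum_(i in A) u i).
Proof.
move=> u0; pose above (A : {set I}) := t < \sum_(i in A) u i.
case: (pickP above) => [A0 tA0|none].
  have [A tA Amin] := arg_minP (fun A : {set I} => \sum_(i in A) u i) tA0.
  exists (\sum_(i in A) u i) => [|B]; first exact: sumr_ge0.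
  by apply/idP/idP => [/Amin //|]; apply: lt_le_trans tA.
exists (\sum_(i in [set: I]) u i + 1) => [|A]; first by rewrite addr_ge0 ?sumr_ge0.
rewrite -/(above A) none; apply/esym/negbTE; rewrite -ltNge.
by apply: le_lt_trans (ler_sum_subset u0 (subsetT A)) _; rewrite ltrDl.
Qed.

Lemma lex_arg_min (I : finType) (P : pred I) (f g : I -> R) i0 : P i0 ->
  exists2 i, P i & forall j, P j -> f i <= f j /\ (f j = f i -> g i <= g j).
Proof.
move=> Pi0; have [i1 Pi1 i1min] := arg_minP f Pi0.
have Pi1' : [pred j | P j && (f j == f i1)] i1 by rewrite /= Pi1 eqxx.
have [i /andP [Pi /eqP fi] imin] := arg_minP g Pi1'.
exists i => // j Pj; rewrite fi; split=> [|fj]; first exact: i1min.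
by apply: imin; rewrite /= Pj fj eqxx.
Qed.

End Perturbation.

Section RemoveLightestMWC.
Local Open Scope ring_scope.
Variables (R : realType) (n : nat) (w : 'I_n -> R) (k : 'I_n).
Implicit Types (S T M : {set 'I_n}).

Definition wsum T := \sum_(i in T) w i.

Definition code_bound : R := (\sum_(i < n) 2 ^ (n - i))%:R + 1.

(* Tie-breaking weights: [k] gets [- code_bound], which outweighs all the other
   players together, and a player [i < k] of positive weight gets [2 ^ (n - i)],
   so the code of a minimal winning coalition containing [k] identifies it. *)
Definition code_weight (i : 'I_n) : R :=
  if i == k then - code_bound else if (i < k)%N && (0 < w i) then (2 ^ (n - i))%:R else 0.

Definition code T := \sum_(i in T) code_weight i.

Lemma code_weight_ge0 i : i != k -> 0 <= code_weight i.
Proof. by rewrite /code_weight => /negbTE ->; case: ifP. Qed.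

Lemma code_weight_k : code_weight k = - code_bound.
Proof. by rewrite /code_weight eqxx. Qed.

Lemma code_ge0 T : k \notin T -> 0 <= code T.
Proof.
by move=> kT; apply: sumr_ge0 => i iT; apply: code_weight_ge0; apply: contraNneq kT => <-.
Qed.

Lemma code_D1 T : k \in T -> code T = - code_bound + code (T :\ k).
Proof. by move=> kT; rewrite /code (big_setD1 k kT) code_weight_k. Qed.

Lemma code_D1_lt T : code (T :\ k) < code_bound.
Proof.
have le_all : code (T :\ k) <= \sum_(i < n) (2 ^ (n - i))%:R.
  rewrite [leRHS](eq_bigl (fun i => i \in [set: 'I_n])) => [|i]; last by rewrite in_setT.
  apply: le_trans (ler_sum_subset (fun i => ler0n _ _) (subsetT (T :\ k))).
  apply: ler_sum => i; rewrite !inE => /andP [ik _].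
  by rewrite /code_weight (negbTE ik); case: ifP.
by rewrite /code_bound natr_sum; apply: le_lt_trans le_all _; rewrite ltrDl.
Qed.

Lemma code_bound_gt0 : 0 < code_bound.
Proof. exact: ltr_wpDl (ler0n _ _) ltr01. Qed.

Lemma code_lt0 T : k \in T -> code T < 0.
Proof. by move=> kT; rewrite code_D1 // addrC subr_lt0 code_D1_lt. Qed.

Lemma code_sorted (i j : 'I_n) : sorted_weights w ->
  j = i.+1 :> nat -> (j < k)%N -> code_weight j <= code_weight i.
Proof.
move=> sw eji ltjk; have ltik : (i < k)%N by rewrite (ltn_trans _ ltjk) // eji.
have neq (x : 'I_n) : (x < k)%N -> x != k.
  by move=> ltxk; apply: contraTneq ltxk => ->; rewrite ltnn.
rewrite /code_weight (negbTE (neq _ ltjk)) (negbTE (neq _ ltik)) ltjk ltik /=.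
case: ifP => [wj_gt0|_]; last by case: ifP.
rewrite (lt_le_trans wj_gt0 (sw i j eji)) ler_nat leq_exp2l //; lia.
Qed.

Variables (G : game n) (q : R).
Hypotheses (Gw : wrep G q w) (w_sorted : sorted_weights w).
Hypothesis w_beyond_k : forall i : 'I_n, (k < i)%N -> w i = 0.
Hypothesis Wmin_le_k : forall M i, M \in Wmin G -> i \in M -> (i <= k)%N.

Lemma w_ge0 i : 0 <= w i.
Proof. by case: Gw => _ /(_ i). Qed.

Lemma G_wsum T : G T = (q <= wsum T).
Proof. by case: Gw => _ _ ->. Qed.

Lemma wsum_subset M T : M \subset T -> wsum M <= wsum T.
Proof. exact: ler_sum_subset w_ge0. Qed.

Lemma wsumD1 T i : i \in T -> wsum T = w i + wsum (T :\ i).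
Proof. exact: big_setD1. Qed.

Lemma code_Wmin M : M \in Wmin G -> k \in M ->
  code M = - code_bound + (\sum_(i in M :\ k) 2 ^ (n - i))%:R.
Proof.
move=> MW kM; rewrite code_D1 // natr_sum; congr (_ + _); apply: eq_bigr => i.
rewrite !inE => /andP [ik iM]; rewrite /code_weight (negbTE ik) (Wmin_weight_gt0 Gw MW iM) andbT.
suff -> : (i < k)%N by [].
by rewrite ltn_neqAle (Wmin_le_k MW iM) andbT; apply: contraNneq ik => /val_inj ->.
Qed.

Lemma code_Wmin_inj M M' : M \in Wmin G -> k \in M -> M' \in Wmin G -> k \in M' ->
  code M = code M' -> M = M'.
Proof.
move=> MW kM M'W kM'; rewrite (code_Wmin MW kM) (code_Wmin M'W kM') => /addrI /eqP.
by rewrite eqr_nat => /eqP /sum_pow2_inj eqMM'; rewrite -(setD1K kM) -(setD1K kM') eqMM'.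
Qed.

Lemma code_null_extension M T : M \subset T -> k \in M -> wsum T = wsum M -> code T = code M.
Proof.
move=> sMT kM eqTM; have null : \sum_(i in T :\: M) w i = 0.
  by move: eqTM; rewrite /wsum (big_setID M) /= (setIidPr sMT); lra.
rewrite /code (big_setID M) /= (setIidPr sMT) [X in _ + X]big1 ?addr0 // => i iTM.
have ik : i != k by apply: contraTneq iTM => ->; rewrite inE kM.
by rewrite /code_weight (negbTE ik) (psumr_eq0P (fun j _ => w_ge0 j) null iTM) ltxx andbF.
Qed.

Variable S : {set 'I_n}.
Hypotheses (SW : S \in Wmin G) (kS : k \in S).
Hypothesis S_lightest : forall M, M \in Wmin G -> k \in M -> wsum S <= wsum M.
Hypothesis S_code_min :
  forall M, M \in Wmin G -> k \in M -> wsum M = wsum S -> code S <= code M.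

Lemma q_le_wsum_S : q <= wsum S.
Proof. by rewrite -G_wsum (Wmin_win SW). Qed.

Lemma wsum_Sk_lt : wsum (S :\ k) < q.
Proof. by rewrite ltNge -G_wsum (Wmin_minimal SW kS). Qed.

Lemma Wmin_light_mem_k M T :
  M \in Wmin G -> M \subset T -> k \in T -> wsum T <= wsum S -> k \in M.
Proof.
move=> MW sMT kT leTS; apply/negPn/negP => kM.
have sMTk : M \subset T :\ k.
  by apply/subsetP => i iM; rewrite !inE (subsetP sMT i iM) andbT; apply: contraNneq kM => <-.
have := wsum_subset sMTk; have := Wmin_win MW; rewrite G_wsum.
by move: leTS; rewrite (wsumD1 kT) (wsumD1 kS); have := wsum_Sk_lt; lra.
Qed.

Definition other_mwc T := [exists M in Wmin G :\ S, M \subset T].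

Lemma other_mwcP T :
  reflect (exists M, [/\ M \in Wmin G, M != S & M \subset T]) (other_mwc T).
Proof.
apply: (iffP exists_inP) => [[M /setD1P [MS MW] sMT]|[M [MW MS sMT]]]; first by exists M.
by exists M; rewrite // in_setD1 MS.
Qed.

Lemma other_mwc_notin_k T : k \notin T -> other_mwc T = G T.
Proof.
move=> kT; apply/other_mwcP/idP => [[M [MW _ sMT]]|GT].
  exact: wrep_monotone Gw _ _ sMT (Wmin_win MW).
have [M MW sMT] := Wmin_sub_exists GT; exists M; split=> //.
by apply: contraNneq kT => eMS; apply: (subsetP sMT); rewrite eMS.
Qed.

Lemma other_mwc_lighter T : k \in T -> wsum T < wsum S -> ~~ other_mwc T.
Proof.
move=> kT ltTS; apply/other_mwcP => -[M [MW _ sMT]].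
have kM := Wmin_light_mem_k MW sMT kT (ltW ltTS).
by have := S_lightest MW kM; have := wsum_subset sMT; lra.
Qed.

(* If [S] is the only minimal winning coalition inside [T], a player [i] of [T]
   outside [S] has positive weight, so [i <= k], and trading [k] for [i] in [S]
   yields a winning coalition avoiding [k]. *)
Lemma other_mwc_heavier T : k \in T -> wsum S < wsum T -> other_mwc T.
Proof.
move=> kT ltST; have GT : G T by rewrite G_wsum (le_trans q_le_wsum_S (ltW ltST)).
have [M MW sMT] := Wmin_sub_exists GT.
apply/other_mwcP; have [eMS|MS] := eqVneq M S; last by exists M.
subst M; have [i /setDP [iT iS] wi_gt0] : exists2 i, i \in T :\: S & 0 < w i.
  apply: sum_gt0_exists; move: ltST.
  by rewrite /wsum [X in _ < X](big_setID S) /= (setIidPr sMT); lra.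
have le_ik : (i <= k)%N.
  by rewrite leqNgt; apply: contraTN wi_gt0 => /w_beyond_k ->; rewrite ltxx.
have iSk : i \notin S :\ k by rewrite inE negb_and iS orbT.
have GT' : G (i |: (S :\ k)).
  rewrite G_wsum /wsum big_setU1 //= -/(wsum _).
  by have := sorted_weights_le w_sorted le_ik; have := wsumD1 kS; have := q_le_wsum_S; lra.
have kT' : k \notin i |: (S :\ k) by rewrite !inE eqxx /= orbF; apply: contraNneq iS => <-.
have [M' M'W sM'T'] := Wmin_sub_exists GT'; exists M'; split=> //.
  by apply: contraNneq kT' => eM'S; apply: (subsetP sM'T'); rewrite eM'S.
apply: subset_trans sM'T' _; apply/subsetP => x; rewrite !inE => /orP [/eqP -> //|/andP [_ xS]].
exact: (subsetP sMT).
Qed.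

Lemma other_mwc_tie T : k \in T -> wsum T = wsum S -> other_mwc T = (code S < code T).
Proof.
move=> kT eqTS; apply/other_mwcP/idP => [[M [MW MS sMT]]|ltST].
  have kM : k \in M by apply: Wmin_light_mem_k MW sMT kT _; rewrite eqTS.
  have eqMS : wsum M = wsum S.
    by apply/eqP; rewrite eq_le S_lightest // andbT -eqTS wsum_subset.
  rewrite (code_null_extension sMT kM) ?eqTS // lt_neqAle S_code_min // andbT.
  by apply: contra MS => /eqP /(code_Wmin_inj SW kS MW kM) ->.
have GT : G T by rewrite G_wsum eqTS q_le_wsum_S.
have [M MW sMT] := Wmin_sub_exists GT; exists M; split=> //.
apply: contraTneq ltST => eMS; subst M.
by rewrite (code_null_extension sMT kS eqTS) ltxx.
Qed.

Definition lowered i := if i == k then w k - (wsum S - q) else w i.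

Lemma lowered_sum T : \sum_(i in T) lowered i = wsum T - (if k \in T then wsum S - q else 0).
Proof.
case: ifP => kT; last first.
  rewrite subr0; apply: eq_bigr => i iT; rewrite /lowered.
  by case: eqP => // eik; rewrite -eik iT in kT.
rewrite (big_setD1 k kT) (wsumD1 kT) /lowered eqxx addrAC; congr (_ + _).
by apply: eq_bigr => i; rewrite !inE => /andP [/negbTE ->].
Qed.

Lemma lex_pos_other_mwc T :
  lex_pos (\sum_(i in T) lowered i - q) (code T - code S) = other_mwc T.
Proof.
rewrite lowered_sum; case: ifP => kT; last first.
  have code_gt : 0 < code T - code S.
    by have := code_ge0 (negbT kT); have := code_lt0 kS; lra.
  rewrite other_mwc_notin_k ?kT // G_wsum /lex_pos code_gt subr0 andbT.
  by rewrite orbC eq_sym -le_eqVlt subr_ge0.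
have -> : wsum T - (wsum S - q) - q = wsum T - wsum S by ring.
rewrite /lex_pos subr_gt0 subr_eq0; case: ltrgtP => cmp /=.
- by rewrite other_mwc_heavier.
- by rewrite (negbTE (other_mwc_lighter kT cmp)).
- by rewrite other_mwc_tie // subr_gt0.
Qed.

Section Perturbed.
Variable eps : R.
Hypotheses (eps_gt0 : 0 < eps) (eps_small : eps * code_bound <= w k - (wsum S - q)).

Definition perturbed i := lowered i + eps * code_weight i.

Lemma perturbed_sum T : \sum_(i in T) perturbed i = \sum_(i in T) lowered i + eps * code T.
Proof. by rewrite big_split /= mulr_sumr. Qed.

Lemma perturbed_ge0 i : 0 <= perturbed i.
Proof.
rewrite /perturbed /lowered /code_weight; have [_|ik] := eqVneq i k.
  by rewrite mulrN subr_ge0.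
by apply: addr_ge0 (w_ge0 i) (mulr_ge0 (ltW eps_gt0) _); case: ifP.
Qed.

Lemma perturbed_sorted : sorted_weights perturbed.
Proof.
move=> i j eji; have ltij : (i < j)%N by rewrite eji ltnSn.
have neq_k (x : 'I_n) : (x < k)%N -> x != k.
  by move=> ltxk; apply: contraTneq ltxk => ->; rewrite ltnn.
have [ltjk|ltkj|/val_inj eqjk] := ltngtP j k.
- rewrite /perturbed /lowered (negbTE (neq_k _ ltjk)) (negbTE (neq_k _ (ltn_trans ltij ltjk))).
  exact: lerD (w_sorted eji) (ler_wpM2l (ltW eps_gt0) (code_sorted w_sorted eji ltjk)).
- have jk : j != k by apply: contraTneq ltkj => ->; rewrite ltnn.
  rewrite /perturbed /lowered /code_weight (negbTE jk) w_beyond_k // ltnNge (ltnW ltkj).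
  by rewrite mulr0 addr0 -/(perturbed i) perturbed_ge0.
- subst j; have ik := neq_k _ ltij.
  rewrite /perturbed /lowered eqxx (negbTE ik) code_weight_k mulrN.
  have := w_sorted eji; have := q_le_wsum_S; have := mulr_ge0 (ltW eps_gt0) (code_weight_ge0 ik).
  by have := mulr_ge0 (ltW eps_gt0) (ltW code_bound_gt0); lra.
Qed.

End Perturbed.

Lemma remove_lightest_mwc : exists G' : game n, cwvg R G' /\ Wmin G' = Wmin G :\ S.
Proof.
have excess_lt : 0 < w k - (wsum S - q) by have := wsumD1 kS; have := wsum_Sk_lt; lra.
have [eps [eps_gt0 eps_le lexE]] := lex_perturbation
  (fun T => \sum_(i in T) lowered i - q) (fun T => code T - code S)
  (divr_gt0 excess_lt code_bound_gt0).
have eps_small : eps * code_bound <= w k - (wsum S - q) by rewrite -ler_pdivlMr ?code_bound_gt0.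
have [q' q'_ge0 q'E] := strict_threshold (q + eps * code S) (perturbed_ge0 eps_gt0 eps_small).
pose G' : game n := [ffun T : {set 'I_n} => q' <= \sum_(i in T) perturbed eps i].
have G'w : wrep G' q' (perturbed eps).
  by split=> // [i|T]; [exact: perturbed_ge0 | rewrite /G' ffunE].
exists G'; split; first exact: sorted_wrep_cwvg G'w (perturbed_sorted eps_gt0 eps_small).
apply: Wmin_upclosure (wrep_monotone Gw) (subD1set _ _) _ => T.
rewrite -[RHS]/(other_mwc T) ffunE -q'E perturbed_sum -lex_pos_other_mwc -lexE -subr_gt0.
by congr (0 < _); ring.
Qed.

End RemoveLightestMWC.

Section Truncation.
Local Open Scope ring_scope.
Variables (R : realType) (n : nat) (w : 'I_n -> R) (k : 'I_n).

Definition truncate (i : 'I_n) : R := if (i <= k)%N then w i else 0.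

Lemma truncate_beyond (i : 'I_n) : (k < i)%N -> truncate i = 0.
Proof. by rewrite /truncate ltnNge => /negbTE ->. Qed.

Lemma truncate_sorted : (forall i, 0 <= w i) -> sorted_weights w -> sorted_weights truncate.
Proof.
move=> w0 sw i j eji; rewrite /truncate eji; case: ifP => [ltik|_]; last by case: ifP.
by rewrite (ltnW ltik) sw.
Qed.

Lemma wrep_truncate (G : game n) q : wrep G q w ->
  (forall M i, M \in Wmin G -> i \in M -> (i <= k)%N) -> wrep G q truncate.
Proof.
move=> Gw le_k; have [q0 w0 GE] := Gw; split=> [//|i|T]; first by rewrite /truncate; case: ifP.
have -> : \sum_(i in T) truncate i = \sum_(i in [set i in T | (i <= k)%N]) w i.
  rewrite big_mkcond [RHS]big_mkcond; apply: eq_bigr => i _; rewrite inE /truncate.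
  by case: (i \in T); case: (i <= k)%N.
rewrite -GE; apply/idP/idP => [GT|]; last first.
  by apply: wrep_monotone Gw _ _ _; apply/subsetP => i /[!inE] /andP [].
have [M MW sMT] := Wmin_sub_exists GT; apply: wrep_monotone Gw _ _ _ (Wmin_win MW).
by apply/subsetP => i iM; rewrite inE (subsetP sMT i iM) (le_k M i MW iM).
Qed.

End Truncation.

Section Poset.
Variables (R : realType) (n : nat).
Implicit Types G H : game n.

Definition losing_game : game n := [ffun _ => false].

Lemma losing_game_cwvg : cwvg R losing_game.
Proof.
have w0 : wrep losing_game (1 : R) (fun=> 0%R).
  by split=> [|//|S]; rewrite ?ffunE ?big1 // ?ler10 ?ler01.
exact: sorted_wrep_cwvg w0 (fun _ _ _ => lexx _).
Qed.

Lemma Wmin_losing_game : Wmin losing_game = set0.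
Proof. by apply/setP => M; rewrite !inE /min_winning ffunE. Qed.

Lemma rho_eq0 G : rho G = 0%N -> G = losing_game.
Proof.
move=> rho0; apply/ffunP => S; rewrite ffunE; apply/negbTE/negP => GS.
have [M MW _] := Wmin_sub_exists GS.
by move: rho0; rewrite /rho (cardsD1 M) MW.
Qed.

Lemma mwc_step_setD1 G G' S : cwvg R G' -> cwvg R G -> S \in Wmin G ->
  Wmin G' = Wmin G :\ S -> mwc_step R G' G.
Proof.
move=> cG' cG SW W'E; do 2!split=> //.
by rewrite W'E subD1set (cardsD1 S (Wmin G)) SW.
Qed.

Lemma cwvg_remove_mwc G : cwvg R G -> (0 < rho G)%N -> exists G', mwc_step R G' G.
Proof.
move=> cG rho_gt0; have [q [w [Gw w_sorted]]] := cwvg_sorted_wrep cG.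
have [S0 S0W] : exists S0, S0 \in Wmin G by apply/set0Pn; rewrite -card_gt0.
case: (boolP (set0 \in Wmin G)) => W0.
  exists losing_game; apply: (mwc_step_setD1 losing_game_cwvg cG W0).
  by rewrite Wmin_losing_game (Wmin_set0 W0 (wrep_monotone Gw)) setDv.
have [i0 i0S0] : exists i0, i0 \in S0 by apply/set0Pn; apply: contraNneq W0 => <-.
pose P (p : {set 'I_n} * 'I_n) := (p.1 \in Wmin G) && (p.2 \in p.1).
have P0 : P (S0, i0) by rewrite /P /= S0W.
have [[S1 k] /andP [/= S1W kS1] kmax] := arg_maxnP (fun p => nat_of_ord p.2) P0.
have le_k M i : M \in Wmin G -> i \in M -> (i <= k)%N.
  by move=> MW iM; apply: (kmax (M, i)); rewrite /P /= MW.
have [_ w0 _] := Gw; pose w' := truncate w k.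
pose cand M := (M \in Wmin G) && (k \in M).
have candP M : M \in Wmin G -> k \in M -> cand M by rewrite /cand => ->.
have [S /andP [SW kS] Smin] := lex_arg_min (wsum w') (code w' k) (candP S1 S1W kS1).
have [G' [cG' W'E]] := @remove_lightest_mwc R n w' k G q (wrep_truncate Gw le_k)
  (truncate_sorted k w0 w_sorted) (@truncate_beyond _ _ w k) le_k S SW kS
  (fun M MW kM => (Smin M (candP M MW kM)).1) (fun M MW kM => (Smin M (candP M MW kM)).2).
by exists G'; apply: mwc_step_setD1 cG' cG SW W'E.
Qed.

Lemma mwc_step_rho G H : mwc_step R G H -> rho H = (rho G).+1.
Proof. by case=> _ [_ [_ cardE]]; rewrite /rho cardE. Qed.

Lemma mwc_le_refl G : mwc_le R G G.
Proof. exact: Relation_Operators.rt1n_refl. Qed.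

Lemma mwc_step_le G H : mwc_step R G H -> mwc_le R G H.
Proof. by move=> GH; apply: Relation_Operators.rt1n_trans GH (mwc_le_refl H). Qed.

Lemma mwc_le_rho G H : mwc_le R G H -> G = H \/ (rho G < rho H)%N.
Proof.
elim=> [|{}G K {}H /mwc_step_rho GK _ [<-|lt]]; [by left | by right; rewrite GK |].
by right; rewrite (ltn_trans _ lt) // GK.
Qed.

Lemma mwc_le_trans G H K : mwc_le R G H -> mwc_le R H K -> mwc_le R G K.
Proof.
move=> GH HK; apply: clos_rt_rt1n.
by apply: (rt_trans _ _ _ H); apply: clos_rt1n_rt.
Qed.

Lemma mwc_le_antisym G H : mwc_le R G H -> mwc_le R H G -> G = H.
Proof.
move=> /mwc_le_rho [//|ltGH] /mwc_le_rho [->//|ltHG].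
by have := ltn_trans ltGH ltHG; rewrite ltnn.
Qed.

Lemma losing_game_mwc_le G : cwvg R G -> mwc_le R losing_game G.
Proof.
have [m] := ubnP (rho G); elim: m G => // m IHm G lt_rho cG.
have [rho0|rho_gt0] := posnP (rho G); first by rewrite (rho_eq0 rho0); apply: mwc_le_refl.
have [G' G'G] := cwvg_remove_mwc cG rho_gt0.
apply: mwc_le_trans (IHm G' _ _) (mwc_step_le G'G); last by case: G'G.
by move: lt_rho; rewrite (mwc_step_rho G'G).
Qed.

Lemma minimal_losing_game G : is_minimal R G -> G = losing_game.
Proof. by case=> cG minG; rewrite (minG _ losing_game_cwvg (losing_game_mwc_le cG)). Qed.

Lemma covers_rho G H : covers R G H -> rho H = (rho G).+1.
Proof.
case=> GH [+ no_mid]; case: GH no_mid => [_ /(_ erefl) //|K {}H GK KH no_mid _].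
have [<-|ltKH] := mwc_le_rho KH; first exact: mwc_step_rho GK.
have GKrho := mwc_step_rho GK; exfalso; apply: no_mid; exists K.
split; first by case: GK => _ [].
split; first by move=> eKG; move: GKrho; rewrite eKG => /n_Sn.
split; first by move=> eKH; rewrite eKH ltnn in ltKH.
by split=> //; apply: mwc_step_le.
Qed.

End Poset.

Theorem theorem6 (R : realType) (n : nat) : (1 <= n)%N ->
  ((forall G : game n, cwvg R G -> mwc_le R G G) /\
   (forall G H : game n, cwvg R G -> cwvg R H ->
      mwc_le R G H -> mwc_le R H G -> G = H) /\
   (forall G H K : game n, cwvg R G -> cwvg R H -> cwvg R K ->
      mwc_le R G H -> mwc_le R H K -> mwc_le R G K)) /\
  ((forall G H : game n, is_minimal R G -> is_minimal R H -> rho G = rho H) /\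
   (forall G H : game n, cwvg R G -> cwvg R H -> mwc_le R G H -> (rho G <= rho H)%N) /\
   (forall G H : game n, cwvg R G -> cwvg R H -> covers R G H -> rho H = (rho G).+1)) /\
  (exists G0 : game n, cwvg R G0 /\ (forall G : game n, cwvg R G -> mwc_le R G0 G) /\
     rho G0 = 0%N).
Proof.
move=> _; split; [split; [|split] | split; [split; [|split] |]].
- by move=> G _; apply: mwc_le_refl.
- by move=> G H _ _; apply: mwc_le_antisym.
- by move=> G H K _ _ _; apply: mwc_le_trans.
- by move=> G H /minimal_losing_game -> /minimal_losing_game ->.
- by move=> G H _ _ /mwc_le_rho [->|/ltnW].
- by move=> G H _ _; apply: covers_rho.
exists (losing_game n); split; first exact: losing_game_cwvg.
by split=> [G|]; [apply: losing_game_mwc_le | rewrite /rho Wmin_losing_game cards0].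
Qed.
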